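(* Let $G^*$ and $G^*_u$ be as in the context. If $S\subseteq[12]$ is such that $\mathsf{MAIS}(G^*_S)<\alpha(G^*_{S,u})$, then $S$ is an independent set in $G^*_u$ and $\bar{\chi}(G^*_{S,u})=|S|$.
   Context: Consider the three-receiver unicast index coding problem with 12 messages indexed by $[12]$, where receiver $u_i$ demands the messages indexed by $W_i$ and knows those indexed by $K_i$: $W_1=\{1,2,3,4\}$, $W_2=\{5,6,7,8\}$, $W_3=\{9,10,11,12\}$, $K_1=\{5,6,9,10\}$, $K_2=\{1,2,9,11\}$, $K_3=\{1,3,5,7\}$. $G^*$ is the directed graph on vertex set $[12]$ with a directed edge $(a,b)$ iff $b\in K_i$, where $i$ is the unique index with $a\in W_i$. $G^*_u$ is the undirected graph on $[12]$ in which $\{a,b\}$ is an edge iff both $(a,b)$ and $(b,a)$ are edges of $G^*$. For $S\subseteq[12]$, $G^*_S$ and $G^*_{S,u}$ are the subgraphs of $G^*$ and $G^*_u$ induced by $S$. $\mathsf{MAIS}(D)$ is the maximum number of vertices of an acyclic induced subgraph of a directed graph $D$; $\alpha$ and $\bar{\chi}$ denote independence number and clique cover number. *)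

From mathcomp Require Import all_boot.
From mathcomp Require Import boolp.
Set Implicit Arguments. Unset Strict Implicit. Unset Printing Implicit Defensive.

(* Vertices: the messages [12]; vertex v : 'I_12 stands for message v+1. *)
Definition V := 'I_12.
Definition msg (v : V) : nat := (val v).+1.

Definition W (i : nat) : seq nat :=
  match i with
  | 1 => [:: 1; 2; 3; 4]
  | 2 => [:: 5; 6; 7; 8]
  | 3 => [:: 9; 10; 11; 12]
  | _ => [::]
  end.
Definition K (i : nat) : seq nat :=
  match i with
  | 1 => [:: 5; 6; 9; 10]
  | 2 => [:: 1; 2; 9; 11]
  | 3 => [:: 1; 3; 5; 7]
  | _ => [::]
  end.

Definition owner (a : nat) : nat :=
  if a \in W 1 then 1 else if a \in W 2 then 2 else 3.

Definition Gstar : rel V := fun a b => msg b \in K (owner (msg a)).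

Definition Gstar_u : rel V := fun a b => Gstar a b && Gstar b a.

Definition acyclic_on (e : rel V) (A : {set V}) : Prop :=
  ~ exists c : seq V, [/\ c != [::], all (fun x => x \in A) c & cycle e c].

Definition MAIS (e : rel V) (S : {set V}) : nat :=
  \max_(A : {set V} | (A \subset S) && `[< acyclic_on e A >]) #|A|.

Definition independent (e : rel V) (A : {set V}) : bool :=
  [forall x in A, forall y in A, (x != y) ==> ~~ e x y].
Definition clique (e : rel V) (A : {set V}) : bool :=
  [forall x in A, forall y in A, (x != y) ==> e x y].

Definition alpha (e : rel V) (S : {set V}) : nat :=
  \max_(A : {set V} | (A \subset S) && independent e A) #|A|.

(* Clique cover number of the subgraph induced by S: minimum number of
   blocks of a partition of S into cliques (the default #|V| is never
   attained as a strict bound since the singleton partition has #|S| blocks). *)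
Definition clique_cover (e : rel V) (S : {set V}) : nat :=
  \big[minn/#|V|]_(P : {set {set V}} |
       partition P S && [forall B in P, clique e B]) #|P|.

From HB Require Import structures.
From mathcomp Require Import all_boot.
From mathcomp Require Import boolp.

Set Implicit Arguments.
Unset Strict Implicit.
Unset Printing Implicit Defensive.

(* Let A be a maximum independent set of G*_u restricted to S. If A induces an
   acyclic subgraph of G*, then MAIS >= alpha. Otherwise A contains a directed
   cycle (in fact one of the triangles 2 -> 10 -> 7 -> 2 or 3 -> 6 -> 11 -> 3),
   and an exhaustive check shows that any vertex z outside A with a neighbour in
   G*_u can replace some vertex of A so that the result is acyclic. If S had an
   edge of G*_u, one of its endpoints would be such a z inside S, again giving
   MAIS >= alpha. Hence S is independent, so every clique in a clique cover of S
   is a singleton. *)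

Section Peeling.

Variables (T : eqType) (e : rel T).

Definition peel (s : seq T) : seq T := [seq x <- s | has (e x) s].

(* A sound certificate of acyclicity: vertices on a cycle are never sinks, so
   they survive every round of peeling. *)
Definition peelable (s : seq T) : bool := iter (size s) peel s == [::].

Lemma cycle_sub_peel (s c : seq T) :
  {subset c <= s} -> cycle e c -> {subset c <= peel s}.
Proof.
move=> cs ec x xc; rewrite mem_filter (cs x xc) andbT.
by apply/hasP; exists (next c x); [apply: cs; rewrite mem_next | exact: next_cycle].
Qed.

Lemma cycle_sub_iter_peel n (s c : seq T) :
  {subset c <= s} -> cycle e c -> {subset c <= iter n peel s}.
Proof. by move=> cs ec; elim: n => //= n IHn; exact: cycle_sub_peel. Qed.

Lemma peelable_cycle (s c : seq T) :
  peelable s -> {subset c <= s} -> cycle e c -> c = [::].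
Proof.
move=> /eqP s0 cs ec; have := cycle_sub_iter_peel (size s) cs ec; rewrite s0.
by case: c {cs ec} => // x c /(_ x (mem_head x c)).
Qed.

End Peeling.

Fixpoint subseqs (T : Type) (s : seq T) : seq (seq T) :=
  if s is x :: s' then [seq x :: t | t <- subseqs s'] ++ subseqs s' else [:: [::]].

Lemma filter_subseqs (T : eqType) (p : pred T) (s : seq T) :
  filter p s \in subseqs s.
Proof.
elim: s => //= x s IHs; rewrite mem_cat.
by case: (p x); rewrite ?map_f ?IHs ?orbT.
Qed.

(* [enum V] is stuck under [vm_compute] (it matches on opaque proofs), so the
   computation below runs over this explicit list of the vertices. *)
Definition vertices : seq V := [seq Ordinal (ltn_pmod i (isT : 0 < 12)) | i <- iota 0 12].

Lemma mem_vertices (x : V) : x \in vertices.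
Proof.
apply/mapP; exists (val x); first by rewrite mem_iota ltn_ord.
by apply: val_inj; rewrite /= modn_small.
Qed.

Lemma acyclic_on_peelable (e : rel V) (A : {set V}) (s : seq V) :
  peelable e s -> {subset A <= s} -> acyclic_on e A.
Proof.
move=> es As [c [c0 /allP cA ec]]; move/eqP: c0; apply.
by apply: (peelable_cycle es) => // x /cA; exact: As.
Qed.

Definition independent_seq (T : eqType) (e : rel T) (s : seq T) : bool :=
  all (fun x => all (fun y => (x != y) ==> ~~ e x y) s) s.

Lemma independent_cyclic_exchange :
  all (fun s => all (fun z => has (fun t => peelable Gstar (z :: [seq x <- s | x != t])) s)
                    [seq z <- vertices | (z \notin s) && has (Gstar_u z) vertices])
      [seq s <- subseqs vertices | independent_seq Gstar_u s && ~~ peelable Gstar s].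
Proof. by vm_compute. Qed.

Lemma independent_exchange_acyclic (A : {set V}) (z w : V) :
  independent Gstar_u A -> z \notin A -> Gstar_u z w ->
  exists B : {set V}, [/\ B \subset z |: A, #|A| <= #|B| & acyclic_on Gstar B].
Proof.
move=> indA zA ezw; set s := [seq x <- vertices | x \in A].
have sA x : (x \in s) = (x \in A) by rewrite mem_filter mem_vertices andbT.
have [acyc_s | cyc_s] := boolP (peelable Gstar s).
  exists A; split=> //; first exact: subsetUr.
  by apply: acyclic_on_peelable acyc_s _ => x; rewrite sA.
have inds : independent_seq Gstar_u s.
  apply/allP => x; rewrite sA => xA; apply/allP => y; rewrite sA => yA.
  by move/forallP: indA => /(_ x); rewrite xA => /forallP /(_ y); rewrite yA.
have /hasP[t] : has (fun t => peelable Gstar (z :: [seq x <- s | x != t])) s.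
  apply: (allP (allP independent_cyclic_exchange s _)).
    by rewrite mem_filter inds cyc_s filter_subseqs.
  by rewrite mem_filter sA zA mem_vertices andbT; apply/hasP; exists w; rewrite ?mem_vertices.
rewrite sA => tA acyc_zt; exists (z |: A :\ t); split.
- by rewrite setUS // subD1set.
- by rewrite cardsU1 in_setD1 (negbTE zA) andbF (cardsD1 t A) tA.
apply: acyclic_on_peelable acyc_zt _ => x; rewrite in_setU1 in_setD1 inE mem_filter sA.
by case/orP=> [-> // | /andP[-> ->]]; rewrite orbT.
Qed.

Lemma leq_MAIS (e : rel V) (S A : {set V}) :
  A \subset S -> acyclic_on e A -> #|A| <= MAIS e S.
Proof. by move=> AS acycA; apply: leq_bigmax_cond; rewrite AS asboolT. Qed.

Lemma alpha_witness (e : rel V) (S : {set V}) :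
  exists A : {set V}, [/\ A \subset S, independent e A & #|A| = alpha e S].
Proof.
have indep0 : (set0 \subset S) && independent e set0.
  by rewrite sub0set; apply/forallP => x; rewrite in_set0.
rewrite /alpha (bigmax_eq_arg
  (P := fun A : {set V} => (A \subset S) && independent e A) _ indep0).
by case: arg_maxnP => // A /andP[AS indA] _; exists A.
Qed.

Lemma independent_of_MAIS_lt_alpha (S : {set V}) :
  MAIS Gstar S < alpha Gstar_u S -> independent Gstar_u S.
Proof.
apply: contraTT => /forallPn [x]; rewrite negb_imply => /andP[xS].
case/forall_inPn => y yS; rewrite negb_imply negbK => /andP[xy exy].
have [A [AS indA <-]] := alpha_witness Gstar_u S.
have [z [w [zS zA ezw]]] : exists z w, [/\ z \in S, z \notin A & Gstar_u z w].
  case xA: (x \in A); last by exists x, y; rewrite xA.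
  case yA: (y \in A); last by exists y, x; rewrite yA /Gstar_u andbC.
  by move/forallP: indA => /(_ x); rewrite xA => /forallP /(_ y); rewrite yA xy exy.
have [B [BzA leAB acycB]] := independent_exchange_acyclic indA zA ezw.
have BS : B \subset S by rewrite (subset_trans BzA) // subUset sub1set zS.
by rewrite -leqNgt (leq_trans leAB) // leq_MAIS.
Qed.

Lemma card_partition_le1 (T : finType) (P : {set {set T}}) (D : {set T}) :
  partition P D -> {in P, forall B : {set T}, #|B| <= 1} -> #|P| = #|D|.
Proof.
move=> partP le1; rewrite (card_partition partP) -sum1_card.
apply: eq_bigr => B PB; apply/eqP; rewrite eqn_leq le1 // andbT card_gt0.
exact: partition_neq0 partP PB.
Qed.

Lemma clique_card_le1 (e : rel V) (B : {set V}) : #|B| <= 1 -> clique e B.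
Proof.
move/card_le1_eqP => B1; apply/forall_inP => x xB; apply/forall_inP => y yB.
by rewrite (B1 x y xB yB) eqxx.
Qed.

Lemma independent_clique_card_le1 (e : rel V) (S B : {set V}) :
  independent e S -> B \subset S -> clique e B -> #|B| <= 1.
Proof.
move=> indS BS cliqB; apply/card_le1_eqP => x y xB yB; case: (eqVneq x y) => // xy.
move/forall_inP: cliqB => /(_ x xB) /forall_inP /(_ y yB); rewrite xy /=.
move/forallP: indS => /(_ x); rewrite (subsetP BS x xB) => /forallP /(_ y).
by rewrite (subsetP BS y yB) xy => /negP.
Qed.

Lemma card_le1_preim_partition_id (T : finType) (D : {set T}) :
  {in preim_partition id D, forall B : {set T}, #|B| <= 1}.
Proof.
move=> _ /imsetP[x _ ->]; apply/card_le1_eqP => y z.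
by rewrite !inE => /andP[_ /eqP <-] /andP[_ /eqP <-].
Qed.

(* [minn] has no neutral element on nat, but [bigD1] only needs an associative
   and commutative operator. *)
HB.instance Definition _ := SemiGroup.isComLaw.Build nat minn minnA minnC.

Lemma clique_cover_independent (e : rel V) (S : {set V}) :
  independent e S -> clique_cover e S = #|S|.
Proof.
move=> indS; set P0 := preim_partition id S.
have coverP0 : partition P0 S && [forall B in P0, clique e B].
  rewrite preim_partitionP; apply/forall_inP => B.
  by move/card_le1_preim_partition_id; exact: clique_card_le1.
have cover_size P : partition P S && [forall B in P, clique e B] -> #|P| = #|S|.
  case/andP=> partP /forall_inP cliqP; apply: (card_partition_le1 partP) => B PB.
  exact: independent_clique_card_le1 indS (partitionS partP PB) (cliqP B PB).
rewrite /clique_cover (bigD1 P0) //= cover_size //.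
apply/minn_idPl; apply: (big_ind (leq #|S|)) => [|m n|P /andP[/cover_size-> _]] //.
- exact: max_card.
- by rewrite leq_min => -> ->.
Qed.

Theorem corollary1 (S : {set V}) :
  MAIS Gstar S < alpha Gstar_u S ->
  independent Gstar_u S /\ clique_cover Gstar_u S = #|S|.
Proof.
move=> lt_MAIS_alpha; have indS := independent_of_MAIS_lt_alpha lt_MAIS_alpha.
by split; [| exact: clique_cover_independent].
Qed.
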